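(* Let $a,b\in\mathbb R$ be such that the cubic $\Gamma_{a,b}:Y^2Z=X^3+aX^2Z+bXZ^2$ is non-singular, let $r_0,r_1\in\mathbb R\setminus\{0\}$ with $(r_0:r_1:1)\in\Gamma_{a,b}$, put $\alpha=r_0^3/r_1^2$, $\beta=a r_0^2/r_1^2$, $\gamma=b r_0/r_1^2$, and let $\Gamma_{\alpha,\beta,\gamma}$ be the curve $y^2x=\alpha+\beta x+\gamma x^2$ (so $\alpha+\beta+\gamma=1$ and $(1,1)\in\Gamma_{\alpha,\beta,\gamma}$), with conjugation $P\mapsto\bar P$ as described in the context. Let $A=(x_0,y_0)$ be an arbitrary but fixed point on $\Gamma_{\alpha,\beta,\gamma}$. For every point $P$ on $\Gamma_{\alpha,\beta,\gamma}$ different from $A$ and $\bar A$, let $g:=AP$ and $\bar g:=A\bar P$. Then the mapping $I_A:g\mapsto\bar g$ is a line involution (of the pencil of lines through $A$).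
   Context: On $\Gamma_{a,b}$ one uses the chord-tangent group law with neutral element the inflection point $\mathcal O=(0:1:0)$; the point $T=(0:0:1)$ has order 2, and the conjugate of a point $P\in\Gamma_{a,b}$ is $\bar P:=T+P$. The projective map $(X:Y:Z)\mapsto(x,y)=\big(r_0Z/X,\ r_0Y/(r_1X)\big)$ (in homogeneous form $(X:Y:Z)\mapsto(r_0Z:r_0Y/r_1:X)$) carries $\Gamma_{a,b}$ onto (the projective closure of) $\Gamma_{\alpha,\beta,\gamma}$ and $(r_0:r_1:1)$ to $(1,1)$; conjugation on $\Gamma_{\alpha,\beta,\gamma}$ is transported via this map. Equivalently, on $\Gamma_{\alpha,\beta,\gamma}$, $\bar P=P+T'$ in the group law with neutral element $(0:1:0)$ (the vertical point at infinity) and $T'=(1:0:0)$ (the horizontal point at infinity). A line involution of the pencil of lines through a point is a map from the pencil to itself which is an involution and preserves cross-ratios of lines. *)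

(* Projective plane P^2(R): points (and lines, via normal vectors) are
   represented by nonzero vectors of R^3 (triples), taken up to scaling. *)
From mathcomp Require Import all_boot all_order all_algebra.
From mathcomp Require Import reals.
Set Implicit Arguments. Unset Strict Implicit. Unset Printing Implicit Defensive.
Import Order.TTheory GRing.Theory Num.Theory.
Local Open Scope ring_scope.

Section Defs.
Variable R : realType.

Definition pt := (R * R * R)%type.

Definition px (u : pt) : R := u.1.1.
Definition py (u : pt) : R := u.1.2.
Definition pz (u : pt) : R := u.2.

Definition dot (u v : pt) : R := px u * px v + py u * py v + pz u * pz v.

Definition cross (u v : pt) : pt :=
  (py u * pz v - pz u * py v, pz u * px v - px u * pz v, px u * py v - py u * px v).

Definition det3 (u v w : pt) : R := dot (cross u v) w.

Definition nonzero (u : pt) : Prop := u <> (0, 0, 0).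

Definition peq (u v : pt) : Prop := nonzero u /\ nonzero v /\ cross u v = (0, 0, 0).

Definition Gab (a b : R) (P : pt) : R :=
  let: (X, Y, Z) := P in Y ^+ 2 * Z - X ^+ 3 - a * X ^+ 2 * Z - b * X * Z ^+ 2.
Definition Gab_X (a b : R) (P : pt) : R :=
  let: (X, Y, Z) := P in - (3%:R * X ^+ 2) - 2%:R * a * X * Z - b * Z ^+ 2.
Definition Gab_Y (a b : R) (P : pt) : R :=
  let: (X, Y, Z) := P in 2%:R * Y * Z.
Definition Gab_Z (a b : R) (P : pt) : R :=
  let: (X, Y, Z) := P in Y ^+ 2 - a * X ^+ 2 - 2%:R * b * X * Z.

Definition on_Gab (a b : R) (P : pt) : Prop := nonzero P /\ Gab a b P = 0.

Definition nonsingular_ab (a b : R) : Prop :=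
  forall P : pt, nonzero P ->
    ~ [/\ Gab a b P = 0, Gab_X a b P = 0, Gab_Y a b P = 0 & Gab_Z a b P = 0].

Definition alpha (r0 r1 : R) : R := r0 ^+ 3 / r1 ^+ 2.
Definition beta (a r0 r1 : R) : R := a * r0 ^+ 2 / r1 ^+ 2.
Definition gamma (b r0 r1 : R) : R := b * r0 / r1 ^+ 2.

Definition Fabg (al be ga : R) (P : pt) : R :=
  let: (X, Y, Z) := P in
  Y ^+ 2 * X - al * Z ^+ 3 - be * X * Z ^+ 2 - ga * X ^+ 2 * Z.

Definition on_curve (al be ga : R) (P : pt) : Prop := nonzero P /\ Fabg al be ga P = 0.

Definition Opt : pt := (0, 1, 0).
Definition Tpt : pt := (1, 0, 0).

(* P, Q, R are the three intersection points (counted with multiplicity) of a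
   line (with normal vector n) with the cubic: the restriction of the cubic
   form to the line is a constant times the product of the linear forms on
   the line vanishing at P, Q and R.  (X |-> det3 P X n is, on the plane
   n^perp, a linear form vanishing exactly at the multiples of P.) *)
Definition coll3 (al be ga : R) (P Q S : pt) : Prop :=
  exists n : pt, [/\ nonzero n, nonzero P, nonzero Q, nonzero S &
    [/\ dot n P = 0, dot n Q = 0, dot n S = 0 &
      exists c : R, forall X : pt, dot n X = 0 ->
        Fabg al be ga X = c * det3 P X n * det3 Q X n * det3 S X n]].

(* Chord-tangent law with neutral element O (an inflection point):
   P + Q = O * (P * Q), where U * V is the third intersection point.
   Conjugation: Pbar = P + T' = O * (P * T'). *)
Definition conj (al be ga : R) (P Pb : pt) : Prop :=
  on_curve al be ga P /\
  exists S : pt, coll3 al be ga P Tpt S /\ coll3 al be ga Opt S Pb.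

Definition in_pencil (A n : pt) : Prop := nonzero n /\ dot n A = 0.

(* cross-ratio of four lines of the pencil through A; for n, m in A^perp,
   det3 n m A is a (fixed, nonzero) multiple of the 2x2 determinant of n, m
   in a basis of A^perp *)
Definition cross_ratio (A n1 n2 n3 n4 : pt) : R :=
  (det3 n1 n3 A * det3 n2 n4 A) / (det3 n1 n4 A * det3 n2 n3 A).

Definition distinct_lines (n m : pt) : Prop := cross n m <> (0, 0, 0).

Definition line_involution (A : pt) (sigma : pt -> pt) : Prop :=
  [/\ (forall n, in_pencil A n -> in_pencil A (sigma n)),
      (forall n m, in_pencil A n -> in_pencil A m -> cross n m = (0, 0, 0) ->
          cross (sigma n) (sigma m) = (0, 0, 0)),
      (forall n, in_pencil A n -> cross (sigma (sigma n)) n = (0, 0, 0)) &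
      (forall n1 n2 n3 n4,
          in_pencil A n1 -> in_pencil A n2 -> in_pencil A n3 -> in_pencil A n4 ->
          distinct_lines n1 n2 -> distinct_lines n1 n3 -> distinct_lines n1 n4 ->
          distinct_lines n2 n3 -> distinct_lines n2 n4 -> distinct_lines n3 n4 ->
          cross_ratio A (sigma n1) (sigma n2) (sigma n3) (sigma n4)
            = cross_ratio A n1 n2 n3 n4)].

End Defs.

(* In the affine chart the conjugation is (x, y) |-> (alpha / (gamma x), -y):
   the line through P and T' = (1:0:0) is horizontal and meets the curve again
   where the product of the abscissae is alpha / gamma, and the line through
   that point and O = (0:1:0) is vertical and meets the curve again at the
   mirror image.  Non-singularity forces b <> 0, so alpha, gamma and x0 are
   nonzero.  Describe a line n1 X + n2 Y + n3 Z = 0 through A = (x0:y0:1) by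
   (n1, n2).  The linear map (n1, n2) |-> (gamma n2, x0 n1) sends AP to the
   line through A and bar P, because modulo the equations of A and P on the
   curve this is a polynomial identity.  Its square is the scalar gamma x0, so
   it is an involution of the pencil, and being linear it preserves
   cross-ratios.  Separate arguments cover O and T', where the affine formula
   degenerates, and show that A bar P is a genuine line: bar P = A would give
   P = bar A, conjugation being an involution. *)

From mathcomp Require Import all_boot all_order all_algebra.
From mathcomp Require Import reals.
From mathcomp Require Import ring lra.
Set Implicit Arguments. Unset Strict Implicit. Unset Printing Implicit Defensive.
Import Order.TTheory GRing.Theory Num.Theory.
Local Open Scope ring_scope.

Section Projective.
Variable R : realType.
Implicit Types (k m : R) (u v w : pt R).

Definition scalept k u : pt R := (k * px u, k * py u, k * pz u).

Definition reflY u : pt R := (px u, - py u, pz u).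

Lemma nonzero_affine (x y : R) : nonzero (x, y, 1).
Proof. by case=> _ _ /eqP; rewrite oner_eq0. Qed.

Lemma nonzero_reflY u : nonzero u -> nonzero (reflY u).
Proof.
case: u => [[u1 u2] u3] nz.
rewrite /reflY /px /py /pz /= => -[e1 e2 e3]; apply: nz.
by rewrite e1 e3 -[u2]opprK e2 oppr0.
Qed.

Lemma cross_eq0C u v : cross u v = (0, 0, 0) -> cross v u = (0, 0, 0).
Proof.
case: u => [[u1 u2] u3]; case: v => [[v1 v2] v3].
by rewrite /cross /px /py /pz /= => -[e1 e2 e3]; congr (_, _, _); lra.
Qed.

Lemma cross_eq0_scalept u v :
  nonzero v -> cross u v = (0, 0, 0) -> exists k, u = scalept k v.
Proof.
case: u => [[u1 u2] u3]; case: v => [[v1 v2] v3].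
rewrite /cross /scalept /nonzero /px /py /pz /= => nz [e1 e2 e3].
have [v1z|v1n] := eqVneq v1 0; last first.
  by exists (u1 / v1); congr (_, _, _); apply: (mulIf v1n);
    rewrite mulrAC mulfVK //; lra.
have [v2z|v2n] := eqVneq v2 0; last first.
  by exists (u2 / v2); congr (_, _, _); apply: (mulIf v2n);
    rewrite mulrAC mulfVK //; lra.
have [v3z|v3n] := eqVneq v3 0; first by case: nz; rewrite v1z v2z v3z.
by exists (u3 / v3); congr (_, _, _); apply: (mulIf v3n);
  rewrite mulrAC mulfVK //; lra.
Qed.

Lemma scalept_cross_eq0 m k u v :
  m != 0 -> scalept m u = scalept k v -> cross u v = (0, 0, 0).
Proof.
case: u => [[u1 u2] u3]; case: v => [[v1 v2] v3].
rewrite /cross /scalept /px /py /pz /= => mn [e1 e2 e3].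
by congr (_, _, _); apply: (mulfI mn); rewrite mulr0 mulrBr !mulrA ?e1 ?e2 ?e3; ring.
Qed.

Lemma dot_eq0_parallel u v w :
  nonzero v -> cross u v = (0, 0, 0) -> dot w v = 0 -> dot w u = 0.
Proof.
move=> nzv /(cross_eq0_scalept nzv)[k ->].
case: v {nzv} => [[v1 v2] v3]; case: w => [[w1 w2] w3].
rewrite /dot /scalept /px /py /pz /= => e.
by rewrite -[RHS](mulr0 k) -e; ring.
Qed.

Lemma cross_eq0_trans u v w : nonzero v ->
  cross u v = (0, 0, 0) -> cross v w = (0, 0, 0) -> cross u w = (0, 0, 0).
Proof.
move=> nzv /(cross_eq0_scalept nzv)[k ->].
case: v {nzv} => [[v1 v2] v3]; case: w => [[w1 w2] w3].
rewrite /cross /scalept /px /py /pz /= => -[e1 e2 e3].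
by congr (_, _, _);
  [rewrite -(mulr0 k) -e1 | rewrite -(mulr0 k) -e2 | rewrite -(mulr0 k) -e3]; ring.
Qed.

Lemma cross_eq0_orthogonal v u w :
  dot v u = 0 -> dot v w = 0 -> cross v (cross u w) = (0, 0, 0).
Proof.
have -> : cross v (cross u w) = (px u * dot v w - px w * dot v u,
    py u * dot v w - py w * dot v u, pz u * dot v w - pz w * dot v u).
  case: v => [[v1 v2] v3]; case: u => [[u1 u2] u3]; case: w => [[w1 w2] w3].
  by rewrite /cross /dot /px /py /pz /=; congr (_, _, _); ring.
by move=> -> ->; rewrite !mulr0 subrr.
Qed.

Lemma dot_cross_eq0l u v : dot (cross u v) u = 0.
Proof.
case: u => [[u1 u2] u3]; case: v => [[v1 v2] v3].
by rewrite /cross /dot /px /py /pz /=; ring.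
Qed.

Lemma cross_eq0_pz u v : nonzero u -> cross u v = (0, 0, 0) -> pz u = 0 -> pz v = 0.
Proof.
move=> nzu /cross_eq0C /(cross_eq0_scalept nzu)[k ->].
by rewrite /scalept /pz /= => ->; rewrite mulr0.
Qed.

End Projective.

Section Pencil.
Variables (R : realType) (ga x0 y0 : R).
Hypotheses (ga_neq0 : ga != 0) (x0_neq0 : x0 != 0).
Local Notation A := (x0, y0, 1).

Definition pencil_invol (n : pt R) : pt R :=
  (ga * py n, x0 * px n, - (x0 * (ga * py n + y0 * px n))).

Lemma in_pencil_coord3 {n1 n2 n3 : R} :
  in_pencil A (n1, n2, n3) -> n3 = - (n1 * x0 + n2 * y0).
Proof. by rewrite /in_pencil /dot /px /py /pz /= => -[_ h]; lra. Qed.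

Lemma in_pencil_pencil_invol n : in_pencil A n -> in_pencil A (pencil_invol n).
Proof.
case: n => [[n1 n2] n3] hn; have n3E := in_pencil_coord3 hn; case: hn => nzn _.
split; last by rewrite /pencil_invol /dot /px /py /pz /=; ring.
rewrite /pencil_invol /nonzero /px /py /pz /= => -[e1 e2 _].
have n2z : n2 = 0 by apply: (mulfI ga_neq0); lra.
have n1z : n1 = 0 by apply: (mulfI x0_neq0); lra.
by apply: nzn; rewrite n3E n1z n2z; congr (_, _, _); ring.
Qed.

Lemma pencil_invol_cross_eq0 n m :
  cross n m = (0, 0, 0) -> cross (pencil_invol n) (pencil_invol m) = (0, 0, 0).
Proof.
case: n => [[n1 n2] n3]; case: m => [[m1 m2] m3].
rewrite /pencil_invol /cross /px /py /pz /= => -[_ _ e].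
by congr (_, _, _); [rewrite -(mulr0 (- (x0 ^+ 2 * ga))) |
  rewrite -(mulr0 (- (x0 * ga * y0))) | rewrite -(mulr0 (- (x0 * ga)))];
  rewrite -e; ring.
Qed.

Lemma pencil_involK n : in_pencil A n -> cross (pencil_invol (pencil_invol n)) n = (0, 0, 0).
Proof.
case: n => [[n1 n2] n3] /in_pencil_coord3 ->.
by rewrite /pencil_invol /cross /px /py /pz /=; congr (_, _, _); ring.
Qed.

Lemma det3_pencil_invol n m : in_pencil A n -> in_pencil A m ->
  det3 (pencil_invol n) (pencil_invol m) A = - (ga * x0) * det3 n m A.
Proof.
case: n => [[n1 n2] n3] /in_pencil_coord3 ->.
case: m => [[m1 m2] m3] /in_pencil_coord3 ->.
by rewrite /pencil_invol /det3 /dot /cross /px /py /pz /=; ring.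
Qed.

Lemma cross_ratio_pencil_invol n1 n2 n3 n4 :
  in_pencil A n1 -> in_pencil A n2 -> in_pencil A n3 -> in_pencil A n4 ->
  cross_ratio A (pencil_invol n1) (pencil_invol n2) (pencil_invol n3) (pencil_invol n4)
  = cross_ratio A n1 n2 n3 n4.
Proof.
move=> h1 h2 h3 h4; rewrite /cross_ratio !det3_pencil_invol //.
set k := - (ga * x0).
have kn : k != 0 by rewrite oppr_eq0 mulf_neq0.
have pull2 a b : k * a * (k * b) = k ^+ 2 * (a * b) by ring.
by rewrite !pull2 invfM mulrACA divff ?mul1r // expf_neq0.
Qed.

Lemma line_involution_pencil_invol : line_involution A pencil_invol.
Proof.
split.
- exact: in_pencil_pencil_invol.
- by move=> n m _ _; apply: pencil_invol_cross_eq0.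
- exact: pencil_involK.
- by move=> n1 n2 n3 n4 h1 h2 h3 h4 *; apply: cross_ratio_pencil_invol.
Qed.

End Pencil.

Lemma sqr_add_eq0 (R : realDomainType) (a b : R) :
  (a ^+ 2 + b ^+ 2 == 0) = (a == 0) && (b == 0).
Proof. by rewrite paddr_eq0 ?sqr_ge0 // !sqrf_eq0. Qed.

Section Curve.
Variables (R : realType) (al be ga : R).
Hypotheses (al_neq0 : al != 0) (ga_neq0 : ga != 0).

(* Along the line, X_t = (-m3, t, m1) makes det3 O X_t n constant, while the
   cubic form is even in t; its linear coefficient gives the last equation. *)
Lemma coll3_Opt_coeffs S Q : coll3 al be ga (Opt R) S Q ->
  exists m1 m3 : R, [/\ m1 ^+ 2 + m3 ^+ 2 != 0,
    m1 * px S + m3 * pz S = 0, m1 * px Q + m3 * pz Q = 0 &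
    py S * (m3 * px Q - m1 * pz Q) + py Q * (m3 * px S - m1 * pz S) = 0].
Proof.
case=> -[[m1 m2] m3] [nzm _ _ _ [dO dS dQ [c Hc]]]; exists m1, m3.
case: S dS Hc => [[S1 S2] S3]; case: Q dQ => [[Q1 Q2] Q3].
rewrite /dot /Opt /px /py /pz /= in dO * => dQ dS Hc.
have m2z : m2 = 0 by lra.
subst m2; set N := m1 ^+ 2 + m3 ^+ 2.
have Nn : N != 0.
  apply/negP; rewrite sqr_add_eq0 => /andP[/eqP m1z /eqP m3z].
  by apply: nzm; rewrite m1z m3z.
have ev t := Hc (- m3, t, m1) ltac:(rewrite /dot /=; ring).
have := ev 0; have := ev 1; have := ev (-1).
rewrite /Fabg /det3 /cross /dot /px /py /pz /= => em e1 e0.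
have cn : c != 0.
  apply/eqP => cz; rewrite cz !mul0r in e0 e1.
  have m3z : m3 = 0 by lra.
  rewrite m3z in e0; have : al * m1 ^+ 3 = 0 by lra.
  move/eqP; rewrite mulf_eq0 (negbTE al_neq0) expf_eq0 /= => /eqP m1z.
  by apply: nzm; rewrite m1z m3z.
split=> //; [lra | lra |].
have : c * N ^+ 2 * (S2 * (m3 * Q1 - m1 * Q3) + Q2 * (m3 * S1 - m1 * S3)) = 0.
  by rewrite /N; lra.
by move/eqP; rewrite mulf_eq0 (negbTE (mulf_neq0 cn (expf_neq0 2 Nn))) => /eqP.
Qed.

Lemma coll3_Opt_reflY S Q :
  coll3 al be ga (Opt R) S Q -> cross Q (reflY S) = (0, 0, 0).
Proof.
move/coll3_Opt_coeffs => [m1 [m3 [Nn]]].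
case: S => [[S1 S2] S3]; case: Q => [[Q1 Q2] Q3].
rewrite /cross /reflY /px /py /pz /= => LS LQ key.
congr (_, _, _); apply: (mulfI Nn); rewrite mulr0.
- transitivity (m3 * S2 * (m1 * Q1 + m3 * Q3) + m3 * Q2 * (m1 * S1 + m3 * S3)
    - m1 * (S2 * (m3 * Q1 - m1 * Q3) + Q2 * (m3 * S1 - m1 * S3))); first by ring.
  by rewrite LS LQ key; ring.
- transitivity (m1 * (Q3 * (m1 * S1 + m3 * S3) - S3 * (m1 * Q1 + m3 * Q3))
    + m3 * (S1 * (m1 * Q1 + m3 * Q3) - Q1 * (m1 * S1 + m3 * S3))); first by ring.
  by rewrite LS LQ; ring.
- transitivity (- (m3 * (S2 * (m3 * Q1 - m1 * Q3) + Q2 * (m3 * S1 - m1 * S3))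
    + m1 * S2 * (m1 * Q1 + m3 * Q3) + m1 * Q2 * (m1 * S1 + m3 * S3))); first by ring.
  by rewrite LS LQ key; ring.
Qed.

(* Along the line, X_t = (t, -n3, n2) makes det3 T X_t n constant; the last two
   equations compare the coefficients of t^0 and t^2 of the cubic form. *)
Lemma coll3_Tpt_coeffs P S : coll3 al be ga P (Tpt R) S ->
  exists n2 n3 c : R, [/\ c * (n2 ^+ 2 + n3 ^+ 2) != 0,
    n2 * py P + n3 * pz P = 0, n2 * py S + n3 * pz S = 0,
    c * (n2 ^+ 2 + n3 ^+ 2) ^+ 3 * (px P * px S) = al * n2 ^+ 3 &
    c * (n2 ^+ 2 + n3 ^+ 2) * ((n2 * pz P - n3 * py P) * (n2 * pz S - n3 * py S))
      = ga * n2].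
Proof.
case=> -[[n1 n2] n3] [nzn _ _ _ [dP dT dS [c Hc]]]; exists n2, n3, c.
case: P S dP dS Hc => [[P1 P2] P3] [[S1 S2] S3].
rewrite /dot /Tpt /px /py /pz /= in dT * => dP dS Hc.
have n1z : n1 = 0 by lra.
subst n1; set N := n2 ^+ 2 + n3 ^+ 2.
have Nn : N != 0.
  apply/negP; rewrite sqr_add_eq0 => /andP[/eqP n2z /eqP n3z].
  by apply: nzn; rewrite n2z n3z.
have ev t := Hc (t, - n3, n2) ltac:(rewrite /dot /=; ring).
have := ev 0; have := ev 1; have := ev (-1).
rewrite /Fabg /det3 /cross /dot /px /py /pz /= => em e1 e0.
have cn : c != 0.
  apply/eqP => cz; rewrite cz !mul0r in e0 e1 em.
  have : ga * n2 = 0 by lra.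
  move/eqP; rewrite mulf_eq0 (negbTE ga_neq0) => /eqP n2z.
  rewrite n2z in e1; have : n3 ^+ 2 = 0 by lra.
  by move/eqP; rewrite sqrf_eq0 => /eqP n3z; apply: nzn; rewrite n2z n3z.
by split; rewrite ?mulf_neq0 // /N; lra.
Qed.

Lemma coll3_Tpt_cases P S : coll3 al be ga P (Tpt R) S ->
  [\/ [/\ pz P != 0, pz S != 0, py P * pz S = py S * pz P
         & ga * px P * px S = al * pz P * pz S],
      [/\ px P = 0, pz P = 0, py S = 0 & pz S = 0] |
      [/\ py P = 0, pz P = 0, px S = 0 & pz S = 0]].
Proof.
move=> PTS; have [nzP nzS] : nonzero P /\ nonzero S by case: PTS => n [].
have [n2 [n3 [c [cNn LP LS E0 E2]]]] := coll3_Tpt_coeffs PTS.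
case: P S {PTS} nzP nzS LP LS E0 E2 => [[P1 P2] P3] [[S1 S2] S3].
rewrite /px /py /pz /=; set N := n2 ^+ 2 + n3 ^+ 2 => nzP nzS LP LS E0 E2.
have [cn Nn] : c != 0 /\ N != 0 by apply/andP; rewrite -negb_or -mulf_eq0.
have cN3n : c * N ^+ 3 != 0 by rewrite mulf_neq0 ?expf_neq0.
have [n2z|n2n] := eqVneq n2 0.
  subst n2; have n3n : n3 != 0 by move: Nn; rewrite /N sqr_add_eq0 eqxx.
  have P3z : P3 = 0 by apply: (mulfI n3n); lra.
  have S3z : S3 = 0 by apply: (mulfI n3n); lra.
  subst P3 S3.
  have PS1 : P1 * S1 = 0 by apply: (mulfI cN3n); rewrite mulr0; lra.
  have PS2 : P2 * S2 = 0.
    have cNn3 : c * N * n3 ^+ 2 != 0 by rewrite mulf_neq0 ?expf_neq0.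
    by apply: (mulfI cNn3); rewrite mulr0; lra.
  move/eqP: PS1; rewrite mulf_eq0 => /orP[/eqP P1z | /eqP S1z].
    have P2n : P2 != 0 by apply/eqP => P2z; apply: nzP; rewrite P1z P2z.
    move/eqP: PS2; rewrite mulf_eq0 (negbTE P2n) => /eqP S2z.
    by apply: Or32.
  have S2n : S2 != 0 by apply/eqP => S2z; apply: nzS; rewrite S1z S2z.
  move/eqP: PS2; rewrite mulf_eq0 (negbTE S2n) orbF => /eqP P2z.
  by apply: Or33.
have P2E : P2 = - (n3 * P3) / n2 by apply: (mulIf n2n); rewrite mulfVK //; lra.
have S2E : S2 = - (n3 * S3) / n2 by apply: (mulIf n2n); rewrite mulfVK //; lra.
have E3 : c * N ^+ 3 * (P3 * S3) = ga * n2 ^+ 3.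
  transitivity (n2 ^+ 2 * (c * N * ((n2 * P3 - n3 * P2) * (n2 * S3 - n3 * S2)))).
    by rewrite P2E S2E /N; field.
  by rewrite E2; ring.
have gn : ga * n2 ^+ 3 != 0 by rewrite mulf_neq0 // expf_neq0.
apply: Or31; split.
- by apply: contraNneq gn => P3z; rewrite -E3 P3z !mul0r mulr0.
- by apply: contraNneq gn => S3z; rewrite -E3 S3z !mulr0.
- by rewrite P2E S2E; field.
- apply: (mulfI cN3n).
  transitivity (ga * (c * N ^+ 3 * (P1 * S1))); first by ring.
  by rewrite E0 mulrCA -E3; ring.
Qed.

(* Homogeneous form of (x, y) |-> (al / (ga x), - y); it vanishes at O and T. *)
Definition conjpt (P : pt R) : pt R :=
  (al * pz P ^+ 2, - (ga * px P * py P), ga * px P * pz P).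

Lemma conjptK P : conjpt (conjpt P) = scalept (al * ga ^+ 2 * px P * pz P ^+ 2) P.
Proof.
case: P => [[P1 P2] P3].
by rewrite /conjpt /scalept /px /py /pz /=; congr (_, _, _); ring.
Qed.

Lemma conjpt_scalept k P : conjpt (scalept k P) = scalept (k ^+ 2) (conjpt P).
Proof.
case: P => [[P1 P2] P3].
by rewrite /conjpt /scalept /px /py /pz /=; congr (_, _, _); ring.
Qed.

Lemma nonzero_conjpt P : pz P != 0 -> nonzero (conjpt P).
Proof.
move=> P3n [e1 _ _]; move/eqP: e1.
by rewrite mulf_eq0 (negbTE al_neq0) expf_eq0 (negbTE P3n) andbF.
Qed.

Lemma on_curve_px_neq0 P : on_curve al be ga P -> pz P != 0 -> px P != 0.
Proof.
case: P => [[P1 P2] P3] [_ fP] P3n; apply/eqP => P1z.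
rewrite /px /pz /= in P1z P3n; move: fP; rewrite /Fabg P1z => fP.
have : al * P3 ^+ 3 = 0 by lra.
by move/eqP; rewrite mulf_eq0 (negbTE al_neq0) expf_eq0 (negbTE P3n) andbF.
Qed.

Lemma conj_affine P Pb : conj al be ga P Pb -> pz P != 0 -> cross Pb (conjpt P) = (0, 0, 0).
Proof.
case=> _ [S [PTS OSPb]] P3n.
have nzS : nonzero S by case: PTS => n [].
apply: (cross_eq0_trans (nonzero_reflY nzS) (coll3_Opt_reflY OSPb)).
case: (coll3_Tpt_cases PTS) => [[_ S3n ePS eTS] | [_ P3z _ _] | [_ P3z _ _]];
  last 2 first; [by rewrite P3z eqxx in P3n | by rewrite P3z eqxx in P3n |].
move: P3n S3n ePS eTS; clear PTS OSPb nzS.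
case: P => [[P1 P2] P3]; case: S => [[S1 S2] S3].
rewrite /conjpt /reflY /cross /px /py /pz /= => P3n S3n ePS eTS.
congr (_, _, _).
- transitivity (ga * P1 * (P2 * S3 - S2 * P3)); first by ring.
  by rewrite ePS subrr mulr0.
- transitivity (P3 * (al * P3 * S3 - ga * P1 * S1)); first by ring.
  by rewrite eTS subrr mulr0.
- apply: (mulIf S3n); rewrite mul0r.
  transitivity (al * P3 * S3 * (S2 * P3 - P2 * S3) - P2 * S3 * (ga * P1 * S1 - al * P3 * S3)).
    by ring.
  by rewrite ePS eTS !subrr; ring.
Qed.

Lemma conj_at_infinity P Pb : conj al be ga P Pb -> pz P = 0 ->
  pz Pb = 0 /\ (px P = 0 /\ py Pb = 0 \/ py P = 0 /\ px Pb = 0).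
Proof.
case=> _ [S [PTS OSPb]] P3z.
have nzS : nonzero S by case: PTS => n [].
have := coll3_Opt_reflY OSPb.
case: (coll3_Tpt_cases PTS) => [[P3n _ _ _] | [P1z _ S2z S3z] | [P2z _ S1z S3z]];
  clear PTS OSPb.
- by rewrite P3z eqxx in P3n.
- case: S nzS S2z S3z => [[S1 S2] S3] nzS; rewrite /py /pz /= => S2z S3z.
  subst S2 S3.
  have S1n : S1 != 0 by apply/eqP => S1z; apply: nzS; rewrite S1z.
  case: Pb => [[U1 U2] U3].
  rewrite /reflY /cross /px /py /pz /= oppr0 => -[_ e2 e3].
  split; last by left; split=> //; apply: (mulIf S1n); lra.
  by apply: (mulIf S1n); lra.
- case: S nzS S1z S3z => [[S1 S2] S3] nzS; rewrite /px /pz /= => S1z S3z.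
  subst S1 S3.
  have S2n : S2 != 0 by apply/eqP => S2z; apply: nzS; rewrite S2z.
  case: Pb => [[U1 U2] U3].
  rewrite /reflY /cross /px /py /pz /= => -[e1 _ e3].
  split; last by right; split=> //; apply: (mulIf S2n); lra.
  by apply: (mulIf S2n); lra.
Qed.

Lemma conj_swap P Pb A Ab : conj al be ga P Pb -> conj al be ga A Ab -> pz A != 0 ->
  cross Pb A = (0, 0, 0) -> cross P Ab = (0, 0, 0).
Proof.
move=> cP cA A3n PbA.
have nzA : nonzero A by move=> A0; rewrite A0 eqxx in A3n.
have nzPb : nonzero Pb by case: cP => _ [S [_ [n []]]].
have P3n : pz P != 0.
  apply/eqP => P3z; have [Pb3z _] := conj_at_infinity cP P3z.
  by rewrite (cross_eq0_pz nzPb PbA Pb3z) eqxx in A3n.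
have /(cross_eq0_scalept nzA)[k PA] : cross (conjpt P) A = (0, 0, 0).
  exact: cross_eq0_trans nzPb (cross_eq0C (conj_affine cP P3n)) PbA.
have mn : al * ga ^+ 2 * px P * pz P ^+ 2 != 0.
  have P1n := on_curve_px_neq0 (proj1 cP) P3n.
  by rewrite !mulf_neq0 ?expf_neq0.
have PAb : cross P (conjpt A) = (0, 0, 0).
  by apply: (scalept_cross_eq0 mn); rewrite -conjptK PA conjpt_scalept.
apply: cross_eq0_trans (nonzero_conjpt A3n) PAb _.
exact/cross_eq0C/(conj_affine cA A3n).
Qed.

Lemma dot_pencil_invol_conjpt x0 y0 P :
  dot (pencil_invol ga x0 y0 (cross (x0, y0, 1) P)) (conjpt P)
  = ga * (x0 * Fabg al be ga P - px P * pz P ^+ 2 * Fabg al be ga (x0, y0, 1)).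
Proof.
case: P => [[P1 P2] P3].
by rewrite /pencil_invol /conjpt /Fabg /dot /cross /px /py /pz /=; ring.
Qed.

Lemma dot_pencil_invol_conj x0 y0 P Pb :
  on_curve al be ga (x0, y0, 1) -> conj al be ga P Pb ->
  dot (pencil_invol ga x0 y0 (cross (x0, y0, 1) P)) Pb = 0.
Proof.
move=> [_ fA] cP; have [P3z|P3n] := eqVneq (pz P) 0.
  have [Pb3z cases] := conj_at_infinity cP P3z.
  case: P Pb P3z Pb3z cases {cP} => [[P1 P2] P3] [[U1 U2] U3].
  rewrite /pencil_invol /dot /cross /px /py /pz /= => -> ->.
  by case=> -[-> ->]; ring.
apply: (dot_eq0_parallel (nonzero_conjpt P3n) (conj_affine cP P3n)).
by rewrite dot_pencil_invol_conjpt fA (proj2 (proj1 cP)) !mulr0 subrr mulr0.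
Qed.

Lemma pencil_invol_conj x0 y0 P Pb Ab : x0 != 0 ->
  on_curve al be ga (x0, y0, 1) -> conj al be ga (x0, y0, 1) Ab -> conj al be ga P Pb ->
  ~ peq P (x0, y0, 1) -> ~ peq P Ab ->
  peq (pencil_invol ga x0 y0 (cross (x0, y0, 1) P)) (cross (x0, y0, 1) Pb).
Proof.
move=> x0n onA cA cP nPA nPAb.
have nzP : nonzero P by case: cP => -[].
have nzAb : nonzero Ab by case: cA => _ [S [_ [n []]]].
have AP_pencil : in_pencil (x0, y0, 1) (cross (x0, y0, 1) P).
  split; last exact: dot_cross_eq0l.
  by move=> AP0; apply: nPA; split=> //; split; [exact: nonzero_affine | exact: cross_eq0C].
have [nz_img img_A] := in_pencil_pencil_invol ga_neq0 x0n AP_pencil.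
split=> //; split; last first.
  exact: cross_eq0_orthogonal img_A (dot_pencil_invol_conj onA cP).
move=> APb0; apply: nPAb; split=> //; split=> //.
exact: conj_swap cP cA (oner_neq0 R) (cross_eq0C APb0).
Qed.

End Curve.

Theorem lemma8 (R : realType) (a b r0 r1 x0 y0 : R) :
  nonsingular_ab a b ->
  r0 != 0 -> r1 != 0 ->
  on_Gab a b (r0, r1, 1) ->
  on_curve (alpha r0 r1) (beta a r0 r1) (gamma b r0 r1) (x0, y0, 1) ->
  exists sigma : pt R -> pt R,
    line_involution (x0, y0, 1) sigma /\
    forall P Pb Ab : pt R,
      conj (alpha r0 r1) (beta a r0 r1) (gamma b r0 r1) (x0, y0, 1) Ab ->
      conj (alpha r0 r1) (beta a r0 r1) (gamma b r0 r1) P Pb ->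
      ~ peq P (x0, y0, 1) -> ~ peq P Ab ->
      peq (sigma (cross (x0, y0, 1) P)) (cross (x0, y0, 1) Pb).
Proof.
move=> nsing r0n r1n _ onA.
have al_neq0 : alpha r0 r1 != 0 by rewrite mulf_neq0 ?invr_neq0 ?expf_neq0.
have b_neq0 : b != 0.
  apply/eqP => b0; apply: (nsing (0, 0, 1) (@nonzero_affine R 0 0)).
  by rewrite /Gab /Gab_X /Gab_Y /Gab_Z b0; split; ring.
have ga_neq0 : gamma b r0 r1 != 0 by rewrite !mulf_neq0 ?invr_neq0 ?expf_neq0.
have x0_neq0 : x0 != 0 := on_curve_px_neq0 al_neq0 onA (oner_neq0 R).
exists (pencil_invol (gamma b r0 r1) x0 y0); split.
  exact: line_involution_pencil_invol.
by move=> P Pb Ab; apply: pencil_invol_conj.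
Qed.
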